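(* Let $\mathcal{H}=\mathbb{C}^{d_1}\otimes\cdots\otimes\mathbb{C}^{d_N}$ with all $d_i\ge2$ and $G=SL(d_1,\mathbb{C})\times\cdots\times SL(d_N,\mathbb{C})$ acting by $g_1\otimes\cdots\otimes g_N$. Suppose $|\Psi\rangle\in\mathcal{H}$ is semistable and $(g_n)_n$ is a sequence in $G$ with $\|g_n|\Psi\rangle\|\to\infty$. Then for every sequence of real numbers $(\phi_n)_n$ such that the limit $\lim_{n\to\infty}\frac{g_n|\Psi\rangle}{\|g_n|\Psi\rangle\|}e^{i\phi_n}$ exists, this limit lies in the null-cone $\mathcal{N}$.
   Context: The null-cone $\mathcal{N}$ is the set of vectors $|\psi\rangle$ with $0\in\overline{G|\psi\rangle}$ (standard topology); a vector is semistable if it is not in $\mathcal{N}$. *)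

From HB Require Import structures.
From mathcomp Require Import all_boot all_order all_algebra.
From mathcomp Require Import all_classical all_reals all_analysis.
From mathcomp Require Import complex.
Set Implicit Arguments. Unset Strict Implicit. Unset Printing Implicit Defensive.
Import Order.TTheory GRing.Theory Num.Theory.
Local Open Scope ring_scope.

Section Defs.
Variable R : realType.
Local Notation C := R[i].
Variables (N : nat) (d : 'I_N -> nat).

(* multi-indices (i_1,...,i_N) with i_k < d_k : basis of C^{d_1} (x) ... (x) C^{d_N} *)
Definition idx := {dffun forall k : 'I_N, 'I_(d k)}.

(* vectors of H = C^{d_1} (x) ... (x) C^{d_N}, in coordinates *)
Definition vec := idx -> C.

Definition gtuple := forall k : 'I_N, 'M[C]_(d k).

Definition inG (g : gtuple) : Prop := forall k, \det (g k) = 1.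

(* action of g_1 (x) ... (x) g_N on a vector *)
Definition act (g : gtuple) (v : vec) : vec :=
  fun i => \sum_(j : idx) (\prod_(k < N) g k (i k) (j k)) * v j.

Definition vnorm (v : vec) : R := Num.sqrt (\sum_(i : idx) Normc.normc (v i) ^+ 2).

Definition vcvg (u : nat -> vec) (l : vec) : Prop :=
  forall e : R, 0 < e -> exists M : nat, forall n, (M <= n)%N ->
    vnorm (fun i => u n i - l i) < e.

Definition nullcone (v : vec) : Prop :=
  forall e : R, 0 < e -> exists g, inG g /\ vnorm (act g v) < e.

Definition semistable (v : vec) : Prop := ~ nullcone v.

Definition expi (phi : R) : C := Complex (cos phi) (sin phi).

End Defs.

(** Write each factor of [g n] in singular value form [P n * g n = D n * Q n],
    with [P n], [Q n] unitary and [D n] diagonal; then [P n] maps the normalised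
    vector to [c * D n (Q n Psi)] with [|c| = 1 / |g n Psi| -> 0].  A cluster
    point [K] of the unitaries [P n] sends [L] to a vector [u] whose nonzero
    coordinates are, for suitable large [n], tiny multiples of the diagonal
    entries [chi n i] of [D n].  Hence [D n^-1] (with a phase making its
    determinant 1) composed with a unitary close enough to [K] maps [L] into any
    neighbourhood of 0. *)

From HB Require Import structures.
From mathcomp Require Import all_boot all_order all_algebra.
From mathcomp Require Import all_classical all_reals all_analysis.
From mathcomp Require Import complex lra ring.
Import Order.TTheory GRing.Theory Num.Theory.
Import numFieldNormedType.Exports.
Local Open Scope ring_scope.
Local Open Scope sesquilinear_scope.
Set Implicit Arguments. Unset Strict Implicit. Unset Printing Implicit Defensive.

Lemma prod_sum_dffun (K : comNzRingType) (I : finType) (T_ : I -> finType)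
    (F : forall i, T_ i -> K) :
  \prod_i \sum_(j : T_ i) F i j = \sum_(f : {dffun forall i, T_ i}) \prod_i F i (f i).
Proof.
pose P_ i : {ffun T_ i -> K} := [ffun j => F i j].
transitivity (\prod_i \sum_(j in tagged_with T_ i) untag 0 (P_ i) j).
  apply: eq_bigr => i _; rewrite -(big_tag P_ i).
  by apply: eq_bigr => j _; rewrite ffunE.
rewrite (bigA_distr_big_dep _ (fun i j => untag 0 (P_ i) j)) -(big_fprod _ _ P_).
rewrite (reindex (@fprod_of_dffun I T_)); last exact/onW_bij/fprod_of_dffun_bij.
apply: eq_bigr => f _; apply: eq_bigr => i _.
by rewrite /fprod_of_dffun fprodE ffunE.
Qed.

Section ComplexNorm.
Variable R : realType.
Local Notation C := R[i].
Local Notation nc := (@Normc.normc R).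

Lemma nc_ge0 (z : C) : 0 <= nc z.
Proof. exact: (@normr_ge0 _ (Rcomplex R)). Qed.

Lemma nc_eq0 (z : C) : (nc z == 0) = (z == 0).
Proof. exact: (@normr_eq0 _ (Rcomplex R)). Qed.

Lemma nc_gt0 (z : C) : (0 < nc z) = (z != 0).
Proof. exact: (@normr_gt0 _ (Rcomplex R)). Qed.

Lemma ncD (z w : C) : nc (z + w) <= nc z + nc w.
Proof. exact: le_normcD. Qed.

Lemma distncC (z w : C) : nc (z - w) = nc (w - z).
Proof. exact: (@distrC _ (Rcomplex R)). Qed.

Lemma nc_sum (I : finType) (F : I -> C) : nc (\sum_i F i) <= \sum_i nc (F i).
Proof.
elim/big_rec2: _ => [|i y z _ hz]; first by rewrite Normc.normc0.
by apply: le_trans (ncD _ _) _; rewrite lerD2l.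
Qed.

Lemma nc_prod (I : finType) (F : I -> C) : nc (\prod_i F i) = \prod_i nc (F i).
Proof.
by elim/big_rec2: _ => [|i y z _ hz]; rewrite ?Normc.normc1 // Normc.normcM hz.
Qed.

Lemma nc_real (x : R) : nc x%:C%C = `|x|.
Proof. by rewrite /= expr0n /= addr0 sqrtr_sqr. Qed.

Lemma nc_sqr (z : C) : (nc z ^+ 2)%:C%C = z * z^*%C.
Proof. by case: z => a b; rewrite rmorphXn /= -sqr_normc normc_def. Qed.

Lemma nc_le_ReIm (z : C) : nc z <= `|complex.Re z| + `|complex.Im z|.
Proof.
case: z => a b /=.
have h : 0 <= `|a| + `|b| by rewrite addr_ge0.
rewrite -[X in _ <= X](ger0_norm h) -sqrtr_sqr; apply: ler_wsqrtr.
rewrite sqrrD -[a ^+ 2]real_normK ?num_real // -[b ^+ 2]real_normK ?num_real //.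
by rewrite -addrA lerD2l lerDr mulrn_wge0 // mulr_ge0.
Qed.

Lemma Re_le_nc (z : C) : `|complex.Re z| <= nc z.
Proof.
case: z => a b /=; rewrite -[`|a|]sqrtr_sqr; apply: ler_wsqrtr.
by rewrite lerDl sqr_ge0.
Qed.

Lemma Im_le_nc (z : C) : `|complex.Im z| <= nc z.
Proof.
case: z => a b /=; rewrite -[`|b|]sqrtr_sqr; apply: ler_wsqrtr.
by rewrite lerDr sqr_ge0.
Qed.

Lemma nc_expi (x : R) : nc (expi x) = 1.
Proof. by rewrite /expi /= cos2Dsin2 sqrtr1. Qed.

Lemma nc_prodB (I : finType) (x y : I -> C) :
  (forall k, nc (x k) <= 1) -> (forall k, nc (y k) <= 1) ->
  nc (\prod_k x k - \prod_k y k) <= \sum_k nc (x k - y k).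
Proof.
move=> x_le1 y_le1.
pose Inv (a b : C) (s : R) := [/\ nc a <= 1, nc b <= 1 & nc (a - b) <= s].
suff [] : Inv (\prod_k x k) (\prod_k y k) (\sum_k nc (x k - y k)) by [].
elim/big_rec3: _ => [|k s b a _ [a_le1 b_le1 ab_le]].
  by split; rewrite ?Normc.normc1 ?subrr ?Normc.normc0.
split; rewrite ?Normc.normcM.
- by rewrite mulr_ile1 ?nc_ge0 ?x_le1.
- by rewrite mulr_ile1 ?nc_ge0 ?y_le1.
have -> : x k * a - y k * b = (x k - y k) * a + y k * (a - b) by ring.
apply: le_trans (ncD _ _) _; rewrite !Normc.normcM lerD //.
  exact: ler_piMr (nc_ge0 _) a_le1.
exact: le_trans (ler_piMl (nc_ge0 _) (y_le1 k)) ab_le.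
Qed.

End ComplexNorm.

Section Unitary.
Variable R : realType.
Local Notation C := R[i].
Local Notation nc := (@Normc.normc R).

Lemma unitarymx_row_norm n (M : 'M[C]_n) a :
  M \is unitarymx -> \sum_b nc (M a b) ^+ 2 = 1.
Proof.
move=> /unitarymxP /matrixP /(_ a a); rewrite !mxE eqxx /= => h.
apply: (@complexI R); rewrite rmorph_sum rmorph1; apply: etrans h.
by apply: eq_bigr => b _; rewrite !mxE -nc_sqr.
Qed.

Lemma unitarymx_entry_le1 n (M : 'M[C]_n) a b : M \is unitarymx -> nc (M a b) <= 1.
Proof.
move=> /(unitarymx_row_norm a) h.
have : nc (M a b) ^+ 2 <= 1.
  by rewrite -h (bigD1 b) //= lerDl sumr_ge0 // => c _; rewrite sqr_ge0.
by rewrite expr_le1 ?nc_ge0.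
Qed.

Lemma unitarymx_det n (M : 'M[C]_n) : M \is unitarymx -> nc (\det M) = 1.
Proof.
move=> /unitarymxP /(congr1 determinant).
rewrite det_mulmx det1 det_map_mx det_tr -nc_sqr -[1](rmorph1 (@real_complex R)).
by move=> /(@complexI R) /eqP; rewrite sqrp_eq1 ?nc_ge0 // => /eqP.
Qed.

Lemma diag_gram_factor n (B : 'M[C]_n) (D : 'rV[C]_n) :
  \det B != 0 -> B *m B ^t* = diag_mx D ->
  exists Q (al : 'rV[C]_n),
    [/\ Q \is unitarymx, forall t, al 0 t != 0 & B = diag_mx al *m Q].
Proof.
move=> detB BB.
pose s t := \sum_j nc (B t j) ^+ 2.
have Ds t : D 0 t = (s t)%:C%C.
  have := congr1 (fun X : 'M[C]_n => X t t) BB; rewrite !mxE eqxx mulr1n => <-.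
  by rewrite rmorph_sum; apply: eq_bigr => j _; rewrite !mxE -nc_sqr.
have s_gt0 t : 0 < s t.
  rewrite lt_def sumr_ge0 ?andbT => [|j _]; last exact: sqr_ge0.
  apply: contra detB => /eqP st0; move/(congr1 determinant): BB.
  rewrite det_mulmx det_map_mx det_tr det_diag (bigD1 t) //= Ds st0 mul0r.
  by rewrite -nc_sqr => /(@complexI R) /eqP; rewrite sqrf_eq0 nc_eq0.
pose al := \row_t (Num.sqrt (s t))%:C%C.
have al_neq0 t : al 0 t != 0.
  by rewrite mxE eq_complex /= eqxx andbT sqrtr_eq0 -ltNge.
have al_conj t : al 0 t * (al 0 t)^*%C = (s t)%:C%C.
  rewrite -nc_sqr mxE nc_real ger0_norm ?sqrtr_ge0 // sqr_sqrtr //; exact: ltW.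
clearbody al; exists (diag_mx (\row_t (al 0 t)^-1) *m B), al; split => //.
  apply/unitarymxP; rewrite trmx_mul map_mxM tr_diag_mx map_diag_mx mulmxA.
  rewrite -[_ *m B *m _]mulmxA BB !mulmx_diag; apply/matrixP => a b; rewrite !mxE.
  case: eqP => [->|_]; last by rewrite !mulr0n.
  rewrite !mulr1n Ds -al_conj fmorphV mulrA mulVf // mul1r mulfV //.
  by rewrite conjC_eq0.
rewrite mulmxA mulmx_diag.
suff -> : \row_j (al 0 j * (\row_t (al 0 t)^-1) 0 j) = const_mx 1.
  by rewrite diag_const_mx mul1mx.
by apply/matrixP => a b; rewrite !mxE mulfV.
Qed.

Lemma svd n (M : 'M[C]_n) : \det M != 0 ->
  {X : 'M[C]_n * 'M[C]_n * 'rV[C]_n |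
    [/\ X.1.1 \is unitarymx, X.1.2 \is unitarymx, forall t, X.2 0 t != 0
      & X.1.1 *m M = diag_mx X.2 *m X.1.2]}.
Proof.
move=> detM; apply: cid; pose A := M *m M ^t*.
have /orthomx_spectralP A_spec : A \is normalmx.
  by apply/normalmxP; rewrite /A trmx_mul map_mxM trmxCK.
set P := spectralmx A in A_spec; set D := spectral_diag A in A_spec.
have P_unitary : P \is unitarymx by apply: spectral_unitarymx.
have detP : \det P != 0.
  by rewrite -nc_eq0 unitarymx_det ?oner_neq0.
have gram : (P *m M) *m (P *m M) ^t* = diag_mx D.
  rewrite trmx_mul map_mxM !mulmxA -[P *m M *m _]mulmxA -/A A_spec.
  rewrite invmx_unitary // !mulmxA (unitarymxP P_unitary) mul1mx.
  by rewrite -mulmxA (unitarymxP P_unitary) mulmx1.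
have [|Q [al [Q_unitary al_neq0 PM]]] := diag_gram_factor _ gram.
  by rewrite det_mulmx mulf_neq0.
by exists (P, Q, al).
Qed.

End Unitary.

Lemma fin_pos_lb (R : realFieldType) (T : finType) (f : T -> R) :
  (forall t, 0 < f t) -> exists2 m, 0 < m & forall t, m <= f t.
Proof.
move=> f_gt0; exists (\big[Num.min/1]_t f t) => [|t].
  by elim/big_rec: _ => // t m _ m_gt0; rewrite lt_min f_gt0.
by rewrite (bigD1 t) //= ge_min lexx.
Qed.

Lemma exists_mul_le (R : realFieldType) (A eps : R) :
  0 <= A -> 0 < eps -> exists2 del, 0 < del & A * del <= eps.
Proof.
move=> A_ge0 eps_gt0; exists (eps / (A + 1)); first by rewrite divr_gt0 ?ltr_wpDl.
by rewrite mulrA ler_pdivrMr ?ltr_wpDl // mulrDr mulr1 mulrC lerDl ltW.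
Qed.

Section Cluster.
Variable R : realType.

Lemma bounded_fin_cluster (T : finType) (x : nat -> T -> R) (B : R) :
  (forall m t, `|x m t| <= B) ->
  exists p : T -> R, forall e, 0 < e -> forall M, exists m,
    (M <= m)%N /\ forall t, `|x m t - p t| < e.
Proof.
move=> x_le; pose y m : 'rV[R]_#|T| := \row_i x m (enum_val i).
have [|q [_ q_cl]] :=
  rV_compact (fun=> @segment_compact R (- B) B) (F := (y @ \oo)%classic) _.
  by exists 0%N => // m _ i /=; rewrite mxE in_itv /= -ler_norml.
exists (fun t => q 0 (enum_rank t)) => e e_gt0 M.
have [] := q_cl (y @` [set m | (M <= m)%N])%classic (ball q e).
- by apply: filterS (nbhs_infty_ge M) => m Mm; exists m.
- exact: nbhsx_ballx.
move=> _ [[m Mm <-] qy]; exists m; split => // t.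
by case: qy => _ /(_ 0 (enum_rank t)); rewrite /ball /= mxE enum_rankK distrC.
Qed.

Local Notation C := R[i].
Local Notation nc := (@Normc.normc R).

Lemma bounded_fin_cluster_complex (T : finType) (x : nat -> T -> C) :
  (forall m t, nc (x m t) <= 1) ->
  exists p : T -> C, (forall t, nc (p t) <= 1) /\
    forall e, 0 < e -> forall M, exists m,
      (M <= m)%N /\ forall t, nc (x m t - p t) < e.
Proof.
move=> x_le1.
pose y m (tb : T * bool) := let z := x m tb.1 in
  if tb.2 then complex.Re z else complex.Im z.
have [|q q_cl] := @bounded_fin_cluster _ y 1.
  by move=> m [t []]; rewrite /y /=; apply: le_trans (x_le1 m t);
    [apply: Re_le_nc | apply: Im_le_nc].
pose p t := (q (t, true) +i* q (t, false))%C.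
have p_cl e : 0 < e -> forall M, exists m,
    (M <= m)%N /\ forall t, nc (x m t - p t) < e.
  move=> e_gt0 M; have [|m [Mm qy]] := q_cl (e / 2) _ M; first by rewrite divr_gt0.
  exists m; split => // t; apply: le_lt_trans (nc_le_ReIm _) _.
  have := qy (t, true); have := qy (t, false); rewrite /y /=.
  case: (x m t) => a b /=; lra.
exists p; split => // t; apply/ler_addgt0Pr => e e_gt0.
have [m [_ /(_ t) xp]] := p_cl e e_gt0 0%N.
rewrite distncC in xp; have := ncD (p t - x m t) (x m t); rewrite subrK.
by move=> /le_trans; apply; rewrite addrC lerD // ltW.
Qed.

End Cluster.

Section Action.
Variables (R : realType) (N : nat) (d : 'I_N -> nat).
Local Notation C := R[i].
Local Notation nc := (@Normc.normc R).
Local Notation vec := (vec R d).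
Local Notation gtuple := (gtuple R d).

Definition gmul (g h : gtuple) : gtuple := fun k => g k *m h k.

Lemma act_gmul (g h : gtuple) (v : vec) : act g (act h v) = act (gmul g h) v.
Proof.
apply: funext => i; rewrite /act.
under eq_bigr do rewrite big_distrr /=.
rewrite exchange_big /=; apply: eq_bigr => l _.
under eq_bigr do rewrite mulrA.
rewrite -big_distrl /=; congr (_ * _).
under [RHS]eq_bigr do rewrite mxE.
rewrite prod_sum_dffun; apply: eq_bigr => j _.
by rewrite -big_split.
Qed.

Lemma actZ (g : gtuple) (c : C) (v : vec) :
  act g (fun i => c * v i) = fun i => c * act g v i.
Proof.
apply: funext => i; rewrite /act big_distrr /=; apply: eq_bigr => j _.
by rewrite mulrCA.
Qed.

Lemma actB (g : gtuple) (v w : vec) :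
  act g (fun i => v i - w i) = fun i => act g v i - act g w i.
Proof.
apply: funext => i; rewrite /act -sumrB; apply: eq_bigr => j _.
by rewrite mulrBr.
Qed.

Lemma act_diag (a : forall k, 'rV[C]_(d k)) (v : vec) :
  act (fun k => diag_mx (a k)) v = fun i => (\prod_k a k 0 (i k)) * v i.
Proof.
apply: funext => i; rewrite /act (bigD1 i) //= [X in _ + X]big1 ?addr0 => [|j ji].
  by congr (_ * _); apply: eq_bigr => k _; rewrite mxE eqxx mulr1n.
have [k ik] : exists k, i k != j k.
  apply/existsP; apply: contraR ji; rewrite negb_exists => /forallP ij.
  by apply/eqP/ffunP => k; have := ij k; rewrite negbK => /eqP.
by rewrite (bigD1 k) //= mxE (negbTE ik) mulr0n mul0r mul0r.
Qed.

Lemma vnorm_ge0 (v : vec) : 0 <= vnorm v.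
Proof. exact: sqrtr_ge0. Qed.

Definition vnorm1 (v : vec) : R := \sum_i nc (v i).

Lemma vnorm1_ge0 (v : vec) : 0 <= vnorm1 v.
Proof. by apply: sumr_ge0 => i _; apply: nc_ge0. Qed.

Lemma nc_le_vnorm (v : vec) i : nc (v i) <= vnorm v.
Proof.
rewrite -[nc (v i)]ger0_norm ?nc_ge0 // -sqrtr_sqr; apply: ler_wsqrtr.
by rewrite (bigD1 i) //= lerDl; apply: sumr_ge0 => j _; apply: sqr_ge0.
Qed.

Lemma vnorm_le_vnorm1 (v : vec) : vnorm v <= vnorm1 v.
Proof.
rewrite -[vnorm1 v]ger0_norm ?vnorm1_ge0 // -sqrtr_sqr; apply: ler_wsqrtr.
rewrite expr2 {2}/vnorm1 big_distrr /=; apply: ler_sum => i _.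
rewrite expr2 ler_wpM2r ?nc_ge0 // /vnorm1 (bigD1 i) //= lerDl.
by apply: sumr_ge0 => j _; apply: nc_ge0.
Qed.

Lemma vnorm1_le_vnorm (v : vec) : vnorm1 v <= #|{: idx d}|%:R * vnorm v.
Proof.
rewrite mulr_natl -sumr_const; apply: ler_sum => i _; exact: nc_le_vnorm.
Qed.

Lemma nc_act_le (K : gtuple) (v : vec) i :
  (forall k a b, nc (K k a b) <= 1) -> nc (act K v i) <= vnorm1 v.
Proof.
move=> K_le1; apply: le_trans (nc_sum _) _; apply: ler_sum => j _.
rewrite Normc.normcM; apply: ler_piMl; first exact: nc_ge0.
by rewrite nc_prod; apply: prodr_ile1 => k _; rewrite nc_ge0 K_le1.
Qed.

Lemma nc_actB_le (K K' : gtuple) (v : vec) i (del : R) :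
  (forall k a b, nc (K k a b) <= 1) -> (forall k a b, nc (K' k a b) <= 1) ->
  (forall k a b, nc (K k a b - K' k a b) <= del) ->
  nc (act K v i - act K' v i) <= N%:R * del * vnorm1 v.
Proof.
move=> K_le1 K'_le1 KK'; rewrite /act -sumrB.
apply: le_trans (nc_sum _) _; rewrite /vnorm1 big_distrr /=; apply: ler_sum => j _.
rewrite -mulrBl Normc.normcM ler_wpM2r ?nc_ge0 //.
apply: le_trans (nc_prodB _ _) _ => [k|k|]; rewrite ?K_le1 ?K'_le1 //.
apply: le_trans (ler_sum _ (fun k _ => KK' k (i k) (j k))) _.
by rewrite sumr_const card_ord mulr_natl.
Qed.

Lemma rescale_inG (P : gtuple) (al : forall k, 'rV[C]_(d k)) :
  (forall k, 0 < d k)%N -> (forall k, nc (\det (P k)) = 1) ->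
  (forall k t, al k 0 t != 0) -> (forall k, nc (\prod_t al k 0 t) = 1) ->
  exists E : forall k, 'rV[C]_(d k),
    (forall k t, nc (E k 0 t * al k 0 t) = 1) /\
    inG (gmul (fun k => diag_mx (E k)) P).
Proof.
move=> d_gt0 detP al_neq0 al_prod.
pose t0 k : 'I_(d k) := Ordinal (d_gt0 k).
pose ph k := (\prod_t al k 0 t) / \det (P k).
have ph_norm k : nc (ph k) = 1.
  by rewrite Normc.normcM Normc.normcV al_prod detP invr1 mulr1.
exists (fun k => \row_t ((if t == t0 k then ph k else 1) / al k 0 t)); split.
  move=> k t; rewrite mxE mulfVK //.
  by case: eqP => _; rewrite ?ph_norm ?Normc.normc1.
move=> k; rewrite /gmul det_mulmx det_diag.
under eq_bigr do rewrite mxE.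
rewrite prodf_div (bigD1 (t0 k)) //= big1 ?mulr1 => [|t /negbTE -> //].
have detP0 : \det (P k) != 0 by rewrite -nc_eq0 detP oner_neq0.
have prod0 : \prod_t al k 0 t != 0 by apply/prodf_neq0 => t _.
by rewrite /ph; field; rewrite prod0 detP0.
Qed.

End Action.

Section Limit.
Variables (R : realType) (N : nat) (d : 'I_N -> nat).
Local Notation C := R[i].
Local Notation nc := (@Normc.normc R).
Local Notation vec := (vec R d).
Local Notation gtuple := (gtuple R d).

Variables (Psi : vec) (g : nat -> gtuple) (phi : nat -> R) (L : vec).
Hypothesis g_in_G : forall n, inG (g n).
Let r n := vnorm (act (g n) Psi).
Hypothesis r_unbounded : forall M : R, exists n0 : nat, forall n, (n0 <= n)%N -> M < r n.
Let v n : vec := fun i => real_complex R (r n)^-1 * act (g n) Psi i * expi (phi n).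
Hypothesis v_cvg : vcvg v L.

Let det_g_neq0 n k : \det (g n k) != 0.
Proof. by rewrite g_in_G oner_neq0. Qed.

Let g_svd n k := svd (det_g_neq0 n k).
Let P n : gtuple := fun k => (sval (g_svd n k)).1.1.
Let Q n : gtuple := fun k => (sval (g_svd n k)).1.2.
Let al n k := (sval (g_svd n k)).2.

Let P_unitary n k : P n k \is unitarymx.
Proof. by case: (svalP (g_svd n k)). Qed.

Let Q_unitary n k : Q n k \is unitarymx.
Proof. by case: (svalP (g_svd n k)). Qed.

Let al_neq0 n k t : al n k 0 t != 0.
Proof. by case: (svalP (g_svd n k)). Qed.

Let Pg n k : P n k *m g n k = diag_mx (al n k) *m Q n k.
Proof. by case: (svalP (g_svd n k)). Qed.

Let chi n (i : idx d) := \prod_k al n k 0 (i k).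

Let chi_neq0 n i : chi n i != 0.
Proof. by apply/prodf_neq0 => k _. Qed.

Lemma nc_prod_al n k : nc (\prod_t al n k 0 t) = 1.
Proof.
move: (congr1 determinant (Pg n k)); rewrite !det_mulmx det_diag g_in_G mulr1.
by move=> /(congr1 nc); rewrite Normc.normcM !unitarymx_det // mulr1 => ->.
Qed.

Lemma P_act_v n : act (P n) (v n) =
  fun i => real_complex R (r n)^-1 * expi (phi n) * (chi n i * act (Q n) Psi i).
Proof.
have -> : v n = fun i => real_complex R (r n)^-1 * expi (phi n) * act (g n) Psi i.
  by apply: funext => i; rewrite /v mulrAC.
rewrite actZ act_gmul.
have -> : gmul (P n) (g n) = gmul (fun k => diag_mx (al n k)) (Q n).
  by apply: functional_extensionality_dep => k; rewrite /gmul Pg.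
by rewrite -act_gmul act_diag.
Qed.

Lemma nc_P_act_v_le n i : nc (act (P n) (v n) i) <= vnorm1 Psi / r n * nc (chi n i).
Proof.
have rc_ge0 : 0 <= (r n)^-1 * nc (chi n i).
  by rewrite mulr_ge0 ?nc_ge0 // invr_ge0 vnorm_ge0.
have QPsi_le : nc (act (Q n) Psi i) <= vnorm1 Psi.
  by apply: nc_act_le => k a b; apply: unitarymx_entry_le1.
rewrite P_act_v !Normc.normcM nc_expi nc_real ger0_norm ?invr_ge0 ?vnorm_ge0 //.
nra.
Qed.

Lemma P_cluster : exists K : gtuple, (forall k a b, nc (K k a b) <= 1) /\
  forall del, 0 < del -> forall M, exists m,
    (M <= m)%N /\ forall k a b, nc (K k a b - P m k a b) <= del.
Proof.
pose T := {k : 'I_N & ('I_(d k) * 'I_(d k))%type}.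
have [|p [p_le1 p_cl]] :=
    @bounded_fin_cluster_complex _ T (fun m t => P m (tag t) (tagged t).1 (tagged t).2).
  by move=> m t; apply: unitarymx_entry_le1.
exists (fun k => \matrix_(a, b) p (existT _ k (a, b))); split => [k a b|del del_gt0 M].
  by rewrite mxE.
have [m [Mm Pp]] := p_cl del del_gt0 M; exists m; split => // k a b.
by rewrite mxE distncC ltW // (Pp (existT _ k (a, b))).
Qed.

Variable K : gtuple.
Hypothesis K_le1 : forall k a b, nc (K k a b) <= 1.
Hypothesis K_cluster : forall del, 0 < del -> forall M, exists m,
  (M <= m)%N /\ forall k a b, nc (K k a b - P m k a b) <= del.

Let u := act K L.

Lemma u_approx tau : 0 < tau -> forall M, exists n,
  (M <= n)%N /\ forall i, nc (u i - act (P n) (v n) i) <= tau.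
Proof.
move=> tau_gt0 M; have tau2_gt0 : 0 < tau / 2 by rewrite divr_gt0.
have [del del_gt0 del_le] :=
  exists_mul_le (mulr_ge0 (ler0n _ N) (vnorm1_ge0 L)) tau2_gt0.
have [eps eps_gt0 eps_le] := exists_mul_le (ler0n _ #|{: idx d}|) tau2_gt0.
have [M0 v_near] := v_cvg eps_gt0.
have [n [Mn KP]] := K_cluster del_gt0 (maxn M M0).
exists n; split => [|i]; first exact: leq_trans (leq_maxl _ _) Mn.
have -> : u i - act (P n) (v n) i =
    (act K L i - act (P n) L i) - act (P n) (fun j => v n j - L j) i.
  by rewrite /u actB /=; ring.
apply: le_trans (ncD _ _) _; rewrite normcN [leRHS](splitr tau); apply: lerD.
  apply: le_trans (nc_actB_le _ _ _ _ _) _ => [|k a b|//|]; rewrite ?K_le1 //.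
    exact: unitarymx_entry_le1.
  by rewrite mulrAC.
apply: le_trans (nc_act_le _ _ _) _ => [k a b|]; first exact: unitarymx_entry_le1.
apply: le_trans (vnorm1_le_vnorm _) (le_trans _ eps_le).
by rewrite ler_wpM2l // ltW // v_near // (leq_trans (leq_maxr _ _) Mn).
Qed.

Lemma u_small rho : 0 < rho -> exists n, forall i, nc (u i) <= rho * nc (chi n i).
Proof.
move=> rho_gt0.
have [|tau tau_gt0 tau_le] := @fin_pos_lb _ _ (fun i => if u i == 0 then 1 else nc (u i) / 2).
  by move=> i; case: eqP => [_|/eqP ui]; rewrite ?ltr01 // divr_gt0 // nc_gt0.
have [n0 r_big] := r_unbounded (2 * vnorm1 Psi / rho).
have [n [n0n u_near]] := u_approx tau_gt0 n0.
exists n => i; have := r_big n n0n.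
have B_ge0 : 0 <= 2 * vnorm1 Psi / rho by rewrite !mulr_ge0 ?vnorm1_ge0 ?invr_ge0 ?ltW.
move=> /[dup] /(le_lt_trans B_ge0) r_gt0; rewrite ltr_pdivrMr // => B_lt.
have Br_le : 2 * (vnorm1 Psi / r n) <= rho.
  by rewrite mulrA ler_pdivrMr // [_ * r n]mulrC; apply: ltW.
have := tau_le i; case: eqP => [-> _|/eqP ui tau_u].
  by rewrite Normc.normc0 mulr_ge0 ?nc_ge0 // ltW.
have := ncD (u i - act (P n) (v n) i) (act (P n) (v n) i); rewrite subrK.
have := u_near i; have := nc_P_act_v_le n i; have := nc_ge0 (chi n i).
nra.
Qed.

Lemma limit_in_nullcone : (forall k, 0 < d k)%N -> nullcone L.
Proof.
move=> d_gt0 e e_gt0; pose D : R := #|{: idx d}|%:R.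
have D_gt0 : 0 < D.
  by rewrite ltr0n; apply/card_gt0P; exists [ffun k => Ordinal (d_gt0 k)].
pose eta := e / (4 * D); have eta_gt0 : 0 < eta by rewrite divr_gt0 ?mulr_gt0.
have [n u_le] := u_small eta_gt0.
have [|mu mu_gt0 mu_le] := @fin_pos_lb _ _ (fun i => nc (chi n i)).
  by move=> i; rewrite nc_gt0.
have [del del_gt0 del_le] :=
  exists_mul_le (mulr_ge0 (ler0n _ N) (vnorm1_ge0 L)) (mulr_gt0 eta_gt0 mu_gt0).
(* [m] is chosen after [n], so that the error [eta * mu] is absorbed by the
   smallest modulus [mu] of the diagonal entries [chi n i]. *)
have [m [_ KP]] := K_cluster del_gt0 0.
have [E [E_al E_in_G]] := rescale_inG d_gt0
  (fun k => unitarymx_det (P_unitary m k)) (al_neq0 n) (nc_prod_al n).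
exists (gmul (fun k => diag_mx (E k)) (P m)); split => //.
rewrite -act_gmul act_diag; apply: le_lt_trans (vnorm_le_vnorm1 _) _.
have entry_le (i : idx d) : nc ((\prod_k E k 0 (i k)) * act (P m) L i) <= 2 * eta.
  have E_chi : nc (\prod_k E k 0 (i k)) * nc (chi n i) = 1.
    rewrite /chi -Normc.normcM -big_split nc_prod; apply: big1 => k _; apply: E_al.

  have PL_u : nc (act (P m) L i - u i) <= eta * mu.
    rewrite distncC; apply: le_trans (nc_actB_le _ _ _ _ _) _ => [|k a b|//|].
    - exact: K_le1.
    - exact: unitarymx_entry_le1.
    - by rewrite mulrAC.
  have := ncD (act (P m) L i - u i) (u i); rewrite subrK Normc.normcM.
  have := u_le i; have := mu_le i; have := nc_ge0 (act (P m) L i).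
  have := nc_ge0 (\prod_k E k 0 (i k)); move: E_chi PL_u.
  nra.
apply: le_lt_trans (ler_sum _ (fun i _ => entry_le i)) _.
have -> : \sum_(i : idx d) 2 * eta = e / 2.
  by rewrite sumr_const -mulr_natl -/D /eta; field; rewrite lt0r_neq0.
by rewrite ltr_pdivrMr // ltr_pMr // ltr1n.
Qed.

End Limit.

Theorem lemma5 (R : realType) (N : nat) (d : 'I_N -> nat)
  (hd : forall k, (2 <= d k)%N)
  (Psi : vec R d) (hPsi : semistable Psi)
  (g : nat -> gtuple R d) (hg : forall n, inG (g n))
  (hdiv : forall M : R, exists n0 : nat, forall n, (n0 <= n)%N ->
            M < vnorm (act (g n) Psi))
  (phi : nat -> R) (L : vec R d)
  (hL : vcvg (fun n => fun i =>
          real_complex R (vnorm (act (g n) Psi))^-1 * act (g n) Psi i * expi (phi n)) L) :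
  nullcone L.
Proof.
have [K [K_le1 K_cluster]] := P_cluster hg.
apply: (limit_in_nullcone (g_in_G := hg) hdiv hL K_le1 K_cluster) => k.
exact: ltnW.
Qed.
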